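(* Let $K$ be an arbitrary field, $n\ge1$, and let $\mathcal J\subset A$ be the ideal generated by $T_1,\dots,T_n$ and the entries of $\Phi^2$. Then for all $1\le p\le n$, $1\le r\le p$, and all $a_1,\dots,a_{p-r},b_1,\dots,b_{p-r}\in[1,n]$, the polynomial $$\mathrm{Rel}(r,p)=\sum_{1\le i_1<\dots<i_r\le n}M(a_1,\dots,a_{p-r},i_1,\dots,i_r;\,b_1,\dots,b_{p-r},i_1,\dots,i_r)$$ lies in $\mathcal J$.
   Context: $A=K[\Phi_{a,b}:1\le a,b\le n]$ with generic matrix $\Phi=(\Phi_{a,b})$. $M(a_1,\dots,a_s;b_1,\dots,b_s)=\det(\Phi_{a_k,b_l})_{1\le k,l\le s}$ for index sequences in $[1,n]$ (zero if an index repeats). $T_i$ is the sum of the principal $i\times i$ minors of $\Phi$. *)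

From HB Require Import structures.
From mathcomp Require Import all_boot all_order all_algebra.
From mathcomp Require Import mpoly.
Set Implicit Arguments. Unset Strict Implicit. Unset Printing Implicit Defensive.
Import GRing.Theory.
Local Open Scope ring_scope.

(* A = K[Phi_{a,b}] is {mpoly K[n*n]}; indices [1,n] are rendered as 'I_n (0-based). *)

Definition Phi (K : fieldType) (n : nat) : 'M[{mpoly K[n * n]}]_n :=
  \matrix_(a < n, b < n) 'X_(mxvec_index a b).

Definition minorM (K : fieldType) (n s : nat) (a b : s.-tuple 'I_n)
  : {mpoly K[n * n]} :=
  \det (\matrix_(k < s, l < s) Phi K n (tnth a k) (tnth b l)).

Definition incr (n r : nat) (t : r.-tuple 'I_n) : bool :=
  sorted (fun x y : 'I_n => (x < y)%N) t.

Definition Tsum (K : fieldType) (n i : nat) : {mpoly K[n * n]} :=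
  \sum_(t : i.-tuple 'I_n | incr t) minorM K t t.

Definition Rel (K : fieldType) (n r p : nat) (a b : (p - r).-tuple 'I_n)
  : {mpoly K[n * n]} :=
  \sum_(t : r.-tuple 'I_n | incr t) minorM K (cat_tuple a t) (cat_tuple b t).

Definition in_ideal (R : comPzRingType) (gens : seq R) (f : R) : Prop :=
  exists c : seq R, f = \sum_(i < size gens) c`_i * gens`_i.

Definition Jgens (K : fieldType) (n : nat) : seq {mpoly K[n * n]} :=
  [seq Tsum K n i | i <- iota 1 n] ++
  [seq (Phi K n *m Phi K n) ij.1 ij.2 | ij <- enum {: 'I_n * 'I_n}].

From mathcomp Require Import all_boot all_order all_algebra.
From mathcomp Require Import mpoly perm.
From mathcomp Require Import ring zify.
Set Implicit Arguments. Unset Strict Implicit. Unset Printing Implicit Defensive.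
Import GRing.Theory.
Local Open Scope ring_scope.

(* Write m = p - r, P = Phi[a; b], Q = Phi[a; :], S = Phi[:; b] and
   B(x) = [[P, Q], [S, x + Phi]].  Expanding det B(x) along the rows carrying
   x, its coefficient of x^(n-r) is Rel(r, p), while that of det (x + Phi) is
   T_r.  Left multiplication by a block matrix of determinant x^(2m) turns B(x)
   into [[x^2 P, 0], [S, x + Phi]] up to entries in the ideal generated by the
   entries of Phi^2, because Q S and Q Phi are blocks of Phi^2.  Comparing
   determinants and cancelling x^(2m) coefficientwise gives
   Rel(r, p) = det P * T_r modulo that ideal, and T_r lies in J. *)

Record ideal_pred (R : comPzRingType) (I : R -> Prop) : Prop := IdealPred {
  ideal0 : I 0;
  idealD : forall x y, I x -> I y -> I (x + y);
  idealMl : forall c x, I x -> I (c * x) }.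

Definition mx_ideal (R : comPzRingType) (I : R -> Prop) m n (M : 'M[R]_(m, n)) :=
  forall i j, I (M i j).

Definition poly_ideal (R : comNzRingType) (I : R -> Prop) (q : {poly R}) :=
  forall k, I q`_k.

Section IdealTheory.
Variables (R : comPzRingType) (I : R -> Prop).
Hypothesis idI : ideal_pred I.

Lemma idealN x : I x -> I (- x).
Proof. by move=> Ix; rewrite -mulN1r; apply: (idealMl idI). Qed.

Lemma idealMr c x : I x -> I (x * c).
Proof. by move=> Ix; rewrite mulrC; apply: (idealMl idI). Qed.

Lemma ideal_sum (J : Type) (s : seq J) (P : pred J) (F : J -> R) :
  (forall j, P j -> I (F j)) -> I (\sum_(j <- s | P j) F j).
Proof.
move=> IF; elim/big_rec: _ => [|j x Pj Ix]; first exact: (ideal0 idI).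
by apply: (idealD idI) => //; apply: IF.
Qed.

Lemma ideal_prodB (J : Type) (s : seq J) (P : pred J) (F G : J -> R) :
  (forall j, P j -> I (F j - G j)) ->
  I (\prod_(j <- s | P j) F j - \prod_(j <- s | P j) G j).
Proof.
move=> IFG; elim/big_rec2: _ => [|j y x Pj Ixy]; first by rewrite subrr; apply: (ideal0 idI).
have -> : F j * x - G j * y = F j * (x - y) + (F j - G j) * y by ring.
by apply: (idealD idI); [apply: (idealMl idI) | apply: idealMr; apply: IFG].
Qed.

Lemma ideal_detB k (A B : 'M[R]_k) : mx_ideal I (A - B) -> I (\det A - \det B).
Proof.
move=> IAB; rewrite -sumrB; apply: ideal_sum => s _.
rewrite -mulrBr; apply: (idealMl idI); apply: ideal_prodB => i _.
by move: (IAB i (s i)); rewrite !mxE.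
Qed.

Lemma mx_ideal0 m n : mx_ideal I (0 : 'M_(m, n)).
Proof. by move=> i j; rewrite mxE; apply: (ideal0 idI). Qed.

Lemma mx_idealD m n (A B : 'M_(m, n)) :
  mx_ideal I A -> mx_ideal I B -> mx_ideal I (A + B).
Proof. by move=> IA IB i j; rewrite mxE; apply: (idealD idI). Qed.

Lemma mx_idealN m n (A : 'M_(m, n)) : mx_ideal I A -> mx_ideal I (- A).
Proof. by move=> IA i j; rewrite mxE; apply: idealN. Qed.

Lemma mx_idealZ m n c (A : 'M_(m, n)) : mx_ideal I A -> mx_ideal I (c *: A).
Proof. by move=> IA i j; rewrite mxE; apply: (idealMl idI). Qed.

Lemma mx_idealMr m n p (A : 'M_(m, n)) (B : 'M_(n, p)) :
  mx_ideal I A -> mx_ideal I (A *m B).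
Proof. by move=> IA i j; rewrite mxE; apply: ideal_sum => k _; apply: idealMr. Qed.

Lemma mx_ideal_block m1 m2 n1 n2 (Aul : 'M_(m1, n1)) (Aur : 'M_(m1, n2))
    (Adl : 'M_(m2, n1)) (Adr : 'M_(m2, n2)) :
  mx_ideal I Aul -> mx_ideal I Aur -> mx_ideal I Adl -> mx_ideal I Adr ->
  mx_ideal I (block_mx Aul Aur Adl Adr).
Proof.
move=> Iul Iur Idl Idr i j.
case: (split_ordP i) => {}i ->; case: (split_ordP j) => {}j ->.
- by rewrite block_mxEul.
- by rewrite block_mxEur.
- by rewrite block_mxEdl.
by rewrite block_mxEdr.
Qed.

(* Left multiplication by [[x^2, -Q (x - F)], [0, 1]] makes the block matrix
   lower block triangular modulo I; its determinant x^(2m) is the price. *)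
Lemma det_block_mod_ideal m n (x : R) (P : 'M_m) (Q : 'M_(m, n)) (S : 'M_(n, m))
    (F : 'M_n) :
  mx_ideal I (Q *m S) -> mx_ideal I (Q *m F) ->
  I (x ^+ (2 * m) * (\det (block_mx P Q S (x%:M + F)) - \det P * \det (x%:M + F))).
Proof.
move=> IQS IQF.
pose L := block_mx ((x ^+ 2)%:M : 'M_m) (- (Q *m (x%:M - F))) 0 (1%:M : 'M_n).
pose T := block_mx (x ^+ 2 *: P) 0 S (x%:M + F).
have detL : \det L = x ^+ (2 * m) by rewrite det_ublock det_scalar det1 mulr1 exprM.
have detT : \det T = x ^+ (2 * m) * (\det P * \det (x%:M + F)).
  by rewrite det_lblock detZ exprM mulrA.
have diff_sq : (x%:M - F) *m (x%:M + F) = (x ^+ 2)%:M - F *m F.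
  rewrite mulmxDr !mulmxBl !mul_scalar_mx mul_mx_scalar scale_scalar_mx -expr2.
  by rewrite addrA subrK.
have ILBT : mx_ideal I (L *m block_mx P Q S (x%:M + F) - T).
  rewrite mulmx_block opp_block_mx add_block_mx.
  apply: mx_ideal_block.
  - rewrite mul_scalar_mx addrAC subrr add0r mulNmx mulmxBr mulmxBl mul_mx_scalar.
    rewrite -scalemxAl; apply: mx_idealN.
    by apply: mx_idealD; [apply: mx_idealZ | apply: mx_idealN; apply: mx_idealMr].
  - rewrite oppr0 addr0 mulNmx -mulmxA diff_sq mulmxBr mul_scalar_mx mul_mx_scalar.
    by rewrite opprB addrC subrK mulmxA; apply: mx_idealMr.
  - by rewrite mul0mx mul1mx add0r subrr; apply: mx_ideal0.
  by rewrite mul0mx mul1mx add0r subrr; apply: mx_ideal0.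
by have := ideal_detB ILBT; rewrite det_mulmx detL detT mulrBr.
Qed.

End IdealTheory.

Section PolyIdeal.
Variables (R : comNzRingType) (I : R -> Prop).
Hypothesis idI : ideal_pred I.

Lemma poly_ideal_pred : ideal_pred (poly_ideal I).
Proof.
split=> [k|p q Ip Iq k|c q Iq k]; first by rewrite coef0; apply: (ideal0 idI).
  by rewrite coefD; apply: (idealD idI).
by rewrite coefM; apply: ideal_sum => // j _; apply: (idealMl idI).
Qed.

Lemma poly_idealC c : I c -> poly_ideal I c%:P.
Proof. by move=> Ic k; rewrite coefC; case: eqP => _ //; apply: (ideal0 idI). Qed.

Lemma poly_ideal_XnM k q : poly_ideal I ('X^k * q) -> poly_ideal I q.
Proof. by move=> Iq i; have := Iq (i + k)%N; rewrite coefXnM ltnNge leq_addl addnK. Qed.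

Lemma mx_ideal_polyC m n (M : 'M[R]_(m, n)) :
  mx_ideal I M -> mx_ideal (poly_ideal I) (map_mx polyC M).
Proof. by move=> IM i j; rewrite mxE; apply: poly_idealC. Qed.

End PolyIdeal.

Lemma ltn_ord_trans K : transitive (fun x y : 'I_K => (x < y)%N).
Proof. by move=> y x z; apply: ltn_trans. Qed.

Lemma ltn_ord_irr K : irreflexive (fun x y : 'I_K => (x < y)%N).
Proof. by move=> x; rewrite ltnn. Qed.

Lemma enum_ord_ltn_sorted K : sorted (fun x y : 'I_K => (x < y)%N) (enum 'I_K).
Proof. by have := iota_ltn_sorted 0 K; rewrite -val_enum_ord sorted_map. Qed.

Lemma incr_surj_ord_id K (h : 'I_K -> 'I_K) :
  {homo h : x y / (x < y)%N} -> (forall i, i \in codom h) -> h =1 id.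
Proof.
move=> h_incr h_surj.
have map_h : map h (enum 'I_K) = enum 'I_K.
  apply: (irr_sorted_eq (@ltn_ord_trans K) (@ltn_ord_irr K)).
  - by apply: (homo_sorted h_incr); apply: enum_ord_ltn_sorted.
  - exact: enum_ord_ltn_sorted.
  by move=> i; rewrite mem_enum -codomE h_surj.
move=> i; have := congr1 (fun s => nth i s i) map_h.
rewrite (nth_map i) ?size_enum_ord ?ltn_ord //.
by have -> : nth i (enum 'I_K) i = i by apply: val_inj; rewrite /= nth_enum_ord.
Qed.

Lemma incr_ord_inj k K (h : 'I_k -> 'I_K) : {homo h : x y / (x < y)%N} -> injective h.
Proof.
move=> h_incr x y hxy; apply: val_inj; case: (ltngtP x y) => // /h_incr;
  by rewrite hxy ltnn.
Qed.

Lemma det_mxsub_incr_surj (R : comPzRingType) k K (h : 'I_k -> 'I_K) (M : 'M[R]_K) :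
  {homo h : x y / (x < y)%N} -> (forall i, i \in codom h) -> \det (mxsub h h M) = \det M.
Proof.
move=> h_incr h_surj; have h_inj := incr_ord_inj h_incr.
have ekK : k = K.
  rewrite -[k]card_ord -(card_codom h_inj) -[RHS](card_ord K).
  by apply: eq_card => i; rewrite h_surj.
subst k; have h_id := incr_surj_ord_id h_incr h_surj.
by congr (\det _); apply/matrixP => i j; rewrite mxE !h_id.
Qed.

Lemma lift_ltn K (i : 'I_K.+1) (x y : 'I_K) : (lift i x < lift i y)%N = (x < y)%N.
Proof. by rewrite /= /bump; case: (leqP i x); case: (leqP i y); lia. Qed.

Section UnitRows.
Variable R : comNzRingType.

Definition unit_rows K (f : {ffun 'I_K -> bool}) (M : 'M[R]_K) : 'M[R]_K :=
  \matrix_(i, j) if f i then (i == j)%:R else M i j.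

Lemma card_lift_ffun K (f : {ffun 'I_K.+1 -> bool}) i0 : f i0 ->
  #|[set i | f i]| = #|[set x | [ffun x => f (lift i0 x)] x]|.+1.
Proof.
move=> f_i0; rewrite (cardsD1 i0) inE f_i0 -(card_imset _ (@lift_inj _ i0)).
congr (_ + _)%N; apply: eq_card => i; rewrite !inE.
have [<-|ne] := eqVneq i0 i.
  by apply/esym/negbTE/imsetP => -[x _ /eqP]; rewrite (negbTE (neq_lift _ _)).
case: (unlift_some ne) => y -> _ /=.
by rewrite (mem_imset _ _ (@lift_inj _ i0)) inE ffunE.
Qed.

Lemma det_unit_rows_lift K (f : {ffun 'I_K.+1 -> bool}) (M : 'M[R]_K.+1) i0 :
  f i0 -> \det (unit_rows f M) =
          \det (unit_rows [ffun x => f (lift i0 x)] (row' i0 (col' i0 M))).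
Proof.
move=> f_i0; rewrite (expand_det_row _ i0) (bigD1 i0) //= big1 ?addr0; last first.
  by move=> j ne_j; rewrite mxE f_i0 eq_sym (negbTE ne_j) mul0r.
rewrite mxE f_i0 eqxx mul1r /cofactor -signr_odd addnn odd_double expr0 mul1r.
congr (\det _); apply/matrixP => x y; rewrite !mxE ffunE.
by case: (f (lift i0 x)) => //; rewrite (inj_eq (@lift_inj _ i0)).
Qed.

(* Expand along the unit rows one at a time; since [h] is increasing, the
   minor left at the end carries no sign. *)
Lemma det_unit_rows K k (f : {ffun 'I_K -> bool}) (h : 'I_k -> 'I_K) (M : 'M[R]_K) :
  {homo h : x y / (x < y)%N} -> (forall i, f i = (i \notin codom h)) ->
  \det (unit_rows f M) = \det (mxsub h h M).
Proof.
move: {2}#|[set i | f i]| (erefl #|[set i | f i]|) => c.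
elim: c K f k h M => [|c IH] K f k h M card_f h_incr f_h.
  have h_surj i : i \in codom h.
    by rewrite -[_ \in _]negbK -f_h; apply/negP => fi; move: card_f;
      rewrite (cardD1 i) inE fi.
  rewrite det_mxsub_incr_surj //; congr (\det _); apply/matrixP => i j.
  by rewrite mxE f_h h_surj.
have /card_gt0P [i0] : (0 < #|[set i | f i]|)%N by rewrite card_f.
rewrite inE => f_i0.
move: K f h M card_f f_h h_incr i0 f_i0 => [|K] f h M card_f f_h h_incr i0 f_i0.
  by case: i0 f_i0.
have /all_sig [h' hh'] x : {y | h x = lift i0 y}.
  have : i0 != h x by apply: contraTneq f_i0 => ->; rewrite f_h codom_f.
  by case/unlift_some => y -> _; exists y.
rewrite (det_unit_rows_lift _ f_i0).
have -> : mxsub h h M = mxsub h' h' (row' i0 (col' i0 M)).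
  by apply/matrixP => x y; rewrite !mxE !hh'.
apply: IH => [|x y xy|x].
- by move: card_f; rewrite (card_lift_ffun f_i0) => -[].
- by rewrite -(lift_ltn i0) -!hh'; apply: h_incr.
rewrite ffunE f_h; congr negb.
apply/codomP/codomP => [[y]|[y ->]]; last by exists y; rewrite hh'.
by rewrite hh' => /lift_inj ->; exists y.
Qed.

Definition diagX K (d : 'I_K -> bool) : 'M[{poly R}]_K :=
  \matrix_(i, j) ((d i && (i == j))%:R * 'X).

(* Multilinearity in the rows: each row carrying ['X] splits into its constant
   part and ['X] times a unit row. *)
Lemma det_add_diagX K (d : 'I_K -> bool) (M : 'M[R]_K) :
  \det (map_mx polyC M + diagX d) =
  \sum_(f : {ffun 'I_K -> bool} | [forall i, f i ==> d i])
     'X^(#|[set i | f i]|) * (\det (unit_rows f M))%:P.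
Proof.
rewrite /(\det (_ + _)).
under eq_bigr => s _.
  rewrite (eq_bigr (fun i => \sum_(b : bool)
     (if b then (d i && (i == s i))%:R * 'X else (M i (s i))%:P))); last first.
    by move=> i _; rewrite big_bool /= !mxE addrC.
  rewrite bigA_distr_bigA big_distrr /=.
  over.
rewrite exchange_big /= (bigID (fun f : {ffun 'I_K -> bool} => [forall i, f i ==> d i])) /=.
rewrite [X in _ + X]big1 ?addr0; last first.
  move=> f /forallPn [i]; rewrite negb_imply => /andP[fi ndi].
  by apply: big1 => s _; rewrite (bigD1 i) //= fi (negbTE ndi) /= !mul0r mulr0.
apply: eq_bigr => f fd.
rewrite /(\det (unit_rows f M)) rmorph_sum big_distrr /=.
apply: eq_bigr => s _.
rewrite rmorphM /= rmorph_sign mulrCA; congr (_ * _).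
rewrite rmorph_prod [LHS](bigID (fun i => f i)) [in RHS](bigID (fun i => f i)) /=.
rewrite mulrA; congr (_ * _); last first.
  by apply: eq_bigr => i /negbTE fi; rewrite fi mxE fi.
rewrite (eq_bigr (fun i => (i == s i)%:R%:P * 'X)); last first.
  move=> i fi; move/forallP: fd => /(_ i); rewrite fi /= => -> /=.
  by rewrite rmorph_nat.
rewrite big_split /= mulrC; congr (_ * _); last first.
  by apply: eq_bigr => i fi; rewrite mxE fi.
by rewrite prodr_const; congr (_ ^+ _); apply: eq_card => i; rewrite !inE.
Qed.

Lemma coef_det_add_diagX K (d : 'I_K -> bool) (M : 'M[R]_K) k :
  (\det (map_mx polyC M + diagX d))`_k =
  \sum_(f : {ffun 'I_K -> bool} | [forall i, f i ==> d i] && (#|[set i | f i]| == k))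
     \det (unit_rows f M).
Proof.
rewrite det_add_diagX coef_sum big_mkcondr /=; apply: eq_bigr => f _.
by rewrite mulrC coefCM coefXn eq_sym; case: eqP; rewrite ?mulr1 ?mulr0.
Qed.

End UnitRows.
Arguments diagX {R K} d.

Definition bordered_minor_sum (R : comNzRingType) n m r (A : 'M[R]_n)
    (a b : m.-tuple 'I_n) : R :=
  \sum_(t : r.-tuple 'I_n | incr t) \det (mxsub (tnth (cat_tuple a t)) (tnth (cat_tuple b t)) A).

Definition principal_minor_sum (R : comNzRingType) n r (A : 'M[R]_n) : R :=
  \sum_(t : r.-tuple 'I_n | incr t) \det (mxsub (tnth t) (tnth t) A).

Section Bordered.
Variables (R : comNzRingType) (n' m : nat).
Local Notation n := n'.+1.

(* [mxsub (border_index a) (border_index b) A] is the bordered matrix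
   [[A[a; b], A[a; :]], [A[:; b], A]]. *)
Definition border_index (a : m.-tuple 'I_n) (i : 'I_(m + n)) : 'I_n :=
  match split i with inl x => tnth a x | inr y => y end.

Definition cat_index r (t : r.-tuple 'I_n) (k : 'I_(m + r)) : 'I_(m + n) :=
  match split k with inl x => lshift n x | inr y => rshift m (tnth t y) end.

Definition border_lower (i : 'I_(m + n)) : bool := (m <= i)%N.

Definition omitted r (t : r.-tuple 'I_n) : {ffun 'I_(m + n) -> bool} :=
  [ffun i => i \notin codom (cat_index t)].

Definition kept_seq (f : {ffun 'I_(m + n) -> bool}) : seq 'I_n :=
  [seq y <- enum 'I_n | ~~ f (rshift m y)].

Definition kept r (f : {ffun 'I_(m + n) -> bool}) : r.-tuple 'I_n :=
  insubd [tuple of nseq r ord0] (kept_seq f).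

Lemma border_index_lshift a x : border_index a (lshift n x) = tnth a x.
Proof. by rewrite /border_index (@unsplitK m n (inl x)). Qed.

Lemma border_index_rshift a y : border_index a (rshift m y) = y.
Proof. by rewrite /border_index (@unsplitK m n (inr y)). Qed.

Lemma border_lower_lshift x : border_lower (lshift n x) = false.
Proof. by rewrite /border_lower /= leqNgt ltn_ord. Qed.

Lemma border_lower_rshift y : border_lower (rshift m y) = true.
Proof. by rewrite /border_lower /= leq_addr. Qed.

Lemma cat_index_incr r (t : r.-tuple 'I_n) : incr t -> {homo cat_index t : k l / (k < l)%N}.
Proof.
move=> t_incr k l; rewrite /cat_index.
case: split_ordP => x ->; case: split_ordP => y -> //=.
- by move=> _; have := ltn_ord x; lia.
- by move=> lt_yx; have := ltn_ord y; move: lt_yx; lia.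
rewrite !ltn_add2l => lt_xy.
have := sorted_ltn_nth (@ltn_ord_trans n) ord0 t_incr.
by move=> /(_ x y); rewrite !inE size_tuple !ltn_ord -!tnth_nth; apply.
Qed.

Lemma lshift_codom_cat_index r (t : r.-tuple 'I_n) x : lshift n x \in codom (cat_index t).
Proof.
by apply/codomP; exists (lshift r x); rewrite /cat_index (@unsplitK m r (inl x)).
Qed.

Lemma rshift_codom_cat_index r (t : r.-tuple 'I_n) y :
  (rshift m y \in codom (cat_index t)) = (y \in t).
Proof.
apply/codomP/tnthP => [[k]|[k ->]]; last first.
  by exists (rshift m k); rewrite /cat_index (@unsplitK m r (inr k)).
rewrite /cat_index; case: split_ordP => z _ /eqP; first by rewrite eq_shift.
by rewrite eq_shift => /eqP ->; exists z.
Qed.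

Lemma border_index_cat a r (t : r.-tuple 'I_n) :
  border_index a \o cat_index t =1 tnth (cat_tuple a t).
Proof.
move=> k /=; rewrite /cat_index; case: split_ordP => x ->.
  rewrite border_index_lshift [RHS](tnth_nth (tnth a x)) /=.
  by rewrite nth_cat size_tuple ltn_ord -tnth_nth.
rewrite border_index_rshift [RHS](tnth_nth (tnth t x)) /=.
by rewrite nth_cat size_tuple ltnNge leq_addr /= addKn -tnth_nth.
Qed.

Lemma omitted_lower r (t : r.-tuple 'I_n) : (r <= n)%N -> incr t ->
  [forall i, omitted t i ==> border_lower i] && (#|[set i | omitted t i]| == n - r)%N.
Proof.
move=> le_rn t_incr; apply/andP; split.
  apply/forallP => i; rewrite ffunE; case: (split_ordP i) => x ->.
    by rewrite lshift_codom_cat_index.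
  by rewrite border_lower_rshift implybT.
have -> : [set i | omitted t i] = ~: [set i in codom (cat_index t)].
  by apply/setP => i; rewrite !inE ffunE.
have := cardsC [set i in codom (cat_index t)]; rewrite card_ord cardsE.
by rewrite (card_codom (incr_ord_inj (cat_index_incr t_incr))) card_ord => ?; lia.
Qed.

Lemma kept_omitted r (t : r.-tuple 'I_n) : incr t -> kept r (omitted t) = t.
Proof.
move=> t_incr; apply: val_inj; rewrite /kept val_insubd.
have -> : kept_seq (omitted t) = t.
  apply: (irr_sorted_eq (@ltn_ord_trans n) (@ltn_ord_irr n)) => //.
    exact: (sorted_filter (@ltn_ord_trans n) _ (enum_ord_ltn_sorted n)).
  move=> y; rewrite mem_filter mem_enum andbT ffunE negbK.
  by rewrite rshift_codom_cat_index.
by rewrite size_tuple eqxx.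
Qed.

Section KeptOfOmitted.
Variables (r : nat) (f : {ffun 'I_(m + n) -> bool}).
Hypotheses (le_rn : (r <= n)%N) (f_lower : [forall i, f i ==> border_lower i]).
Hypothesis card_f : #|[set i | f i]| = (n - r)%N.

Lemma f_lower_lshift x : f (lshift n x) = false.
Proof.
by apply/negbTE; have := forallP f_lower (lshift n x); rewrite border_lower_lshift implybF.
Qed.

Lemma size_kept_seq : size (kept_seq f) = r.
Proof.
rewrite -(card_uniqP (filter_uniq _ (enum_uniq _))).
have -> : #|kept_seq f| = #|[predC [set y : 'I_n | f (rshift m y)]]|.
  by apply: eq_card => y; rewrite mem_filter mem_enum andbT !inE.
have : [set i | f i] = @rshift m n @: [set y : 'I_n | f (rshift m y)].
  apply/setP => i; rewrite !inE; case: (split_ordP i) => x ->.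
    by rewrite f_lower_lshift; apply/esym/imsetP => -[y _ /eqP]; rewrite eq_shift.
  by rewrite (mem_imset _ _ (@rshift_inj m n)) inE.
move: card_f => /[swap] ->; rewrite card_imset; last exact: rshift_inj.
by have := cardC [set y : 'I_n | f (rshift m y)]; rewrite card_ord; lia.
Qed.

Lemma omitted_kept : omitted (kept r f) = f /\ incr (kept r f).
Proof.
have val_kept : val (kept r f) = kept_seq f by rewrite val_insubd size_kept_seq eqxx.
split; last first.
  rewrite /incr val_kept; apply: (sorted_filter (@ltn_ord_trans n)).
  exact: enum_ord_ltn_sorted.
apply/ffunP => i; rewrite ffunE; case: (split_ordP i) => x ->.
  by rewrite lshift_codom_cat_index f_lower_lshift.
rewrite rshift_codom_cat_index -[x \in kept r f]/(x \in val (kept r f)) val_kept.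
by rewrite mem_filter mem_enum andbT negbK.
Qed.

End KeptOfOmitted.

Lemma reindex_omitted r (F : {ffun 'I_(m + n) -> bool} -> R) : (r <= n)%N ->
  \sum_(f : {ffun 'I_(m + n) -> bool} |
          [forall i, f i ==> border_lower i] && (#|[set i | f i]| == n - r)%N) F f =
  \sum_(t : r.-tuple 'I_n | incr t) F (omitted t).
Proof.
move=> le_rn; rewrite (reindex_onto (@omitted r) (@kept r)); last first.
  by move=> f /andP[f_lower /eqP card_f]; case: (omitted_kept le_rn f_lower card_f).
apply: eq_bigl => t; apply/idP/idP.
  move=> /andP[/andP[f_lower /eqP card_f] /eqP kept_t].
  by case: (omitted_kept le_rn f_lower card_f); rewrite kept_t.
by move=> t_incr; rewrite omitted_lower // kept_omitted // eqxx.
Qed.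

Definition bordered_charmx (A : 'M[R]_n) (a b : m.-tuple 'I_n) : 'M[{poly R}]_(m + n) :=
  block_mx (map_mx polyC (mxsub (tnth a) (tnth b) A)) (map_mx polyC (rowsub (tnth a) A))
           (map_mx polyC (colsub (tnth b) A)) ('X%:M + map_mx polyC A).

Lemma bordered_charmxE (A : 'M[R]_n) a b :
  bordered_charmx A a b =
  map_mx polyC (mxsub (border_index a) (border_index b) A) + diagX border_lower.
Proof.
apply/matrixP => i j; rewrite [RHS]mxE.
case: (split_ordP i) => x ->; case: (split_ordP j) => y ->.
- by rewrite block_mxEul !mxE !border_index_lshift border_lower_lshift mul0r addr0.
- rewrite block_mxEur !mxE border_index_lshift border_index_rshift.
  by rewrite border_lower_lshift mul0r addr0.
- rewrite block_mxEdl !mxE border_index_lshift border_index_rshift.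
  by rewrite eq_shift andbF mul0r addr0.
rewrite block_mxEdr !mxE !border_index_rshift eq_shift border_lower_rshift.
by rewrite mulr_natl addrC.
Qed.

Lemma coef_det_bordered_charmx (A : 'M[R]_n) a b r : (r <= n)%N ->
  (\det (bordered_charmx A a b))`_(n - r) = bordered_minor_sum r A a b.
Proof.
move=> le_rn; rewrite bordered_charmxE coef_det_add_diagX reindex_omitted //.
apply: eq_bigr => t t_incr.
rewrite (det_unit_rows _ (cat_index_incr t_incr)); last by move=> i; rewrite ffunE.
by rewrite -mxsub_comp (eq_mxsub _ _ (border_index_cat a t) (border_index_cat b t)).
Qed.

End Bordered.

Lemma coef_det_X_add (R : comNzRingType) n' (A : 'M[R]_n'.+1) r : (r <= n'.+1)%N ->
  (\det ('X%:M + map_mx polyC A))`_(n'.+1 - r) = principal_minor_sum r A.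
Proof.
move=> le_rn; have := coef_det_bordered_charmx A [tuple] [tuple] le_rn.
rewrite /bordered_charmx [X in block_mx _ X _ _]flatmx0 det_lblock det_mx00 mul1r => ->.
apply: eq_bigr => t _; congr (\det _); apply/matrixP => k l; rewrite !mxE.
by rewrite !(tnth_nth ord0).
Qed.

Section RelModIdeal.
Variables (R : comNzRingType) (n' : nat) (I : R -> Prop).
Local Notation n := n'.+1.
Variable A : 'M[R]_n.
Hypotheses (idI : ideal_pred I) (I_AA : mx_ideal I (A *m A)).

Lemma bordered_minor_sum_mod_ideal m r (a b : m.-tuple 'I_n) : (r <= n)%N ->
  I (bordered_minor_sum r A a b - \det (mxsub (tnth a) (tnth b) A) * principal_minor_sum r A).
Proof.
move=> le_rn.
have I_QS : mx_ideal (poly_ideal I)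
    (map_mx polyC (rowsub (tnth a) A) *m map_mx polyC (colsub (tnth b) A)).
  rewrite -map_mxM -mxsub_mul; apply: (mx_ideal_polyC idI) => i j.
  by rewrite mxE; apply: I_AA.
have I_QA : mx_ideal (poly_ideal I) (map_mx polyC (rowsub (tnth a) A) *m map_mx polyC A).
  rewrite -map_mxM mul_rowsub_mx; apply: (mx_ideal_polyC idI) => i j.
  by rewrite mxE; apply: I_AA.
have := det_block_mod_ideal (poly_ideal_pred idI) 'X
  (map_mx polyC (mxsub (tnth a) (tnth b) A)) I_QS I_QA.
move=> /poly_ideal_XnM /(_ (n - r)%N).
rewrite -/(bordered_charmx A a b) coefB det_map_mx coefCM.
by rewrite coef_det_bordered_charmx // coef_det_X_add.
Qed.

End RelModIdeal.

Section InIdeal.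
Variables (R : comPzRingType) (gens : seq R).

Lemma in_ideal_pred : ideal_pred (in_ideal gens).
Proof.
split=> [|x y [cx ->] [cy ->]|c x [cx ->]].
- by exists [::]; rewrite big1 // => i _; rewrite nth_nil mul0r.
- exists (mkseq (fun i => cx`_i + cy`_i) (size gens)).
  by rewrite -big_split; apply: eq_bigr => i _; rewrite nth_mkseq // mulrDl.
exists (mkseq (fun i => c * cx`_i) (size gens)).
by rewrite big_distrr; apply: eq_bigr => i _; rewrite nth_mkseq // -mulrA.
Qed.

Lemma in_ideal_gen g : g \in gens -> in_ideal gens g.
Proof.
move=> g_in; have lt_g : (index g gens < size gens)%N by rewrite index_mem.
exists (mkseq (fun i => (i == index g gens)%:R) (size gens)).
rewrite (bigD1 (Ordinal lt_g)) //= big1 ?addr0.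
  by rewrite nth_mkseq // eqxx mul1r nth_index.
move=> i ne_i; rewrite nth_mkseq //.
by have -> : (i == index g gens :> nat) = false := negbTE ne_i; rewrite mul0r.
Qed.

End InIdeal.

Theorem lemma3 (K : fieldType) (n : nat) (hn : (1 <= n)%N)
  (p r : nat) (hp : (1 <= p <= n)%N) (hr : (1 <= r <= p)%N)
  (a b : (p - r).-tuple 'I_n) :
  in_ideal (Jgens K n) (Rel K a b).
Proof.
case: n hn hp a b => // n' _ /andP[_ le_pn] a b; case/andP: hr => r_gt0 le_rp.
have le_rn : (r <= n'.+1)%N := leq_trans le_rp le_pn.
have idJ := @in_ideal_pred _ (Jgens K n'.+1).
have J_Phi2 : mx_ideal (in_ideal (Jgens K n'.+1)) (Phi K n'.+1 *m Phi K n'.+1).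
  move=> i j; apply: in_ideal_gen; rewrite mem_cat; apply/orP; right.
  by apply/mapP; exists (i, j); rewrite ?mem_enum.
have J_T : in_ideal (Jgens K n'.+1) (Tsum K n'.+1 r).
  apply: in_ideal_gen; rewrite mem_cat; apply/orP; left.
  by apply/mapP; exists r; rewrite // mem_iota r_gt0 add1n ltnS.
have := idealD idJ (bordered_minor_sum_mod_ideal idJ J_Phi2 a b le_rn)
  (idealMl idJ (\det (mxsub (tnth a) (tnth b) (Phi K n'.+1))) J_T).
by rewrite subrK.
Qed.
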